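(* Let $x$ be a real number with $\sin(2x)\neq 0$. Define $r_n(x)=\frac{(-1)^n x^{2n+1}}{(2n+1)!}$ for $n\ge 0$, $p_0(x)=q_0(x)=0$, and for $n\ge 1$ $$p_n(x)=p_{n-1}(x)+r_{n-1}(x),\qquad q_n(x)=q_{n-1}(x)+2^{2n-1}r_{n-1}(x).$$ Then $q_n(x)\neq 0$ for all sufficiently large $n$ and $$\tan(x)=\lim_{n\to\infty}\frac{2p_n^2(x)}{q_n(x)}.$$ *)

From Stdlib Require Import Reals Factorial.
Open Scope R_scope.

Definition r (n : nat) (x : R) : R :=
  (-1) ^ n * x ^ (2 * n + 1) / INR (fact (2 * n + 1)).

Fixpoint p (n : nat) (x : R) : R :=
  match n with
  | O => 0
  | S m => p m x + r m x
  end.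

(* q_0 = 0, q_n = q_{n-1} + 2^(2n-1) r_{n-1}; for n = m+1, 2n-1 = 2m+1 *)
Fixpoint q (n : nat) (x : R) : R :=
  match n with
  | O => 0
  | S m => q m x + 2 ^ (2 * m + 1) * r m x
  end.

From Stdlib Require Import Reals.
From Stdlib Require Import Lra Cos_rel.
Open Scope R_scope.

(* p_n(x) is the partial sum of order n - 1 of the Taylor series of sin at x,
   and q_n(x) = p_n(2x). Hence p_n(x) -> sin x and q_n(x) -> sin 2x <> 0, so
   2 p_n(x)^2 / q_n(x) -> 2 sin^2 x / sin 2x = 2 sin^2 x / (2 sin x cos x) = tan x. *)

Lemma r_double (n : nat) (x : R) : r n (2 * x) = 2 ^ (2 * n + 1) * r n x.
Proof. unfold r, Rdiv; rewrite Rpow_mult_distr; ring. Qed.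

Lemma q_eq_p_double (n : nat) (x : R) : q n x = p n (2 * x).
Proof.
  induction n as [|n IH]; simpl; [reflexivity|].
  rewrite IH, r_double; reflexivity.
Qed.

Lemma p_succ_B1 (n : nat) (x : R) : p (S n) x = B1 x n.
Proof.
  induction n as [|n IH].
  - unfold B1; simpl; unfold r; simpl; field.
  - change (p (S (S n)) x) with (p (S n) x + r (S n) x).
    rewrite IH; unfold B1; rewrite tech5; unfold r, Rdiv; ring.
Qed.

Lemma p_cvg_sin (x : R) : Un_cv (fun n => p n x) (sin x).
Proof.
  apply (CV_shift _ 1).
  apply (Un_cv_ext (B1 x)); [|apply B1_cvg].
  intro n; rewrite Nat.add_1_r; symmetry; apply p_succ_B1.
Qed.

Lemma Un_cv_eventually_neq0 (u : nat -> R) (l : R) :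
  Un_cv u l -> l <> 0 -> exists N : nat, forall n : nat, (N <= n)%nat -> u n <> 0.
Proof.
  intros Hu Hl.
  destruct (Hu (Rabs l)) as [N HN]; [apply Rabs_pos_lt; exact Hl|].
  exists N; intros n Hn Hz.
  specialize (HN n Hn); unfold Rdist in HN.
  rewrite Hz, Rminus_0_l, Rabs_Ropp in HN; lra.
Qed.

Lemma Un_cv_div_l (c : R) (u : nat -> R) (l : R) :
  Un_cv u l -> l <> 0 -> Un_cv (fun n => c / u n) (c / l).
Proof.
  intros Hu Hl.
  apply (continuity_seq (fun y => c / y)); [|exact Hu].
  apply (continuity_pt_div (fct_cte c) id); [| |exact Hl].
  - apply continuity_pt_const; intros a b; reflexivity.
  - apply derivable_continuous_pt, derivable_pt_id.
Qed.

Lemma tan_eq_sin_sq_div_sin_double (x : R) :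
  sin (2 * x) <> 0 -> 2 * sin x ^ 2 / sin (2 * x) = tan x.
Proof.
  rewrite sin_2a; intro Hsc.
  assert (Hc : cos x <> 0) by (intro Z; apply Hsc; rewrite Z; ring).
  assert (Hs : sin x <> 0) by (intro Z; apply Hsc; rewrite Z; ring).
  unfold tan; field; tauto.
Qed.

Theorem mainTheorem7 (x : R) (hx : sin (2 * x) <> 0) :
  (exists N : nat, forall n : nat, (N <= n)%nat -> q n x <> 0) /\
  Un_cv (fun n : nat => 2 * (p n x) ^ 2 / q n x) (tan x).
Proof.
  assert (Hq : Un_cv (fun n => q n x) (sin (2 * x))).
  { apply (Un_cv_ext (fun n => p n (2 * x))); [|apply p_cvg_sin].
    intro n; symmetry; apply q_eq_p_double. }
  split; [exact (Un_cv_eventually_neq0 _ _ Hq hx)|].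
  rewrite <- (tan_eq_sin_sq_div_sin_double x hx).
  apply (Un_cv_ext (fun n => p n x * p n x * (2 / q n x))).
  - intro n; unfold Rdiv; ring.
  - replace (2 * sin x ^ 2 / sin (2 * x)) with (sin x * sin x * (2 / sin (2 * x)))
      by (unfold Rdiv; ring).
    apply CV_mult; [apply CV_mult; apply p_cvg_sin|].
    exact (Un_cv_div_l 2 _ _ Hq hx).
Qed.
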